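(* Let $\Lambda_V$ be a countable vertex space and $\Lambda_E$ an edge space containing a distinguished element $0$ (meaning ''no edge''), and let $\mathcal{G}$ be a countable, projectable space of graphs over $(\Lambda_V,\Lambda_E)$ in which every graph has a finite vertex set. Let $P$ be a probability mass function on $\mathcal{G}$ satisfying the positivity condition: for all $G \in \mathcal{G}$, $P(G) > 0$ implies $P(G') > 0$ for every $G' \in S(G)$. Then $P$ can be written in Gibbs form, i.e. there exist a constant $\psi_0$ and functions $\psi_k : \mathcal{G}^{(k)} \to \mathbb{R} \cup \{-\infty\}$, $k = 1,2,\ldots$, such that for every $G \in \mathcal{G}$, $$P(G) = \exp\Big[\psi_0 + \sum_{G' \in S_1(G)} \psi_1(G') + \sum_{G' \in S_2(G)} \psi_2(G') + \cdots\Big].$$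
   Context: A graph is a pair $G=(V,E)$ with $V \subseteq \Lambda_V$ a (finite) set of vertices and $E : V \times V \to \Lambda_E$ an edge function, with no self loops ($E(v,v)=0$). The graph with no vertices is the empty graph $\emptyset$. For $V' \subseteq V$, the subgraph of $G$ induced by $V'$ is $G(V') = (V', E|_{V' \times V'})$. $S(G) = \{G(V') : V' \subseteq V\}$ is the set of all induced subgraphs of $G$ (including the empty graph), and $S_k(G) = \{G' \in S(G) : |V(G')| = k\}$, where $V(G)$ denotes the vertex set of $G$. A graph space $\mathcal{G}$ is projectable if $G \in \mathcal{G}$ implies $G' \in \mathcal{G}$ for all $G' \in S(G)$. $\mathcal{G}^{(k)} = \{(V,E) \in \mathcal{G} : |V| = k\}$ denotes the graphs of order $k$ in $\mathcal{G}$. The convention $\exp(-\infty)=0$ is used. *)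

From HB Require Import structures.
From mathcomp Require Import all_boot all_order all_algebra.
From mathcomp Require Import finmap.
From mathcomp Require Import all_classical all_reals all_analysis.
Set Implicit Arguments. Unset Strict Implicit.
 Unset Printing Implicit Defensive.
Import Order.TTheory GRing.Theory Num.Theory.

Record graph (LV : countType) (LE : Type) (e0 : LE) : Type := Graph {
  gV : {fset LV};
  gE : {ffun gV * gV -> LE};
  gE_noloop : forall v : gV, gE (v, v) = e0 }.
Arguments graph : clear implicits.
Arguments Graph {LV LE e0}.

(* graphs carry a (classical) choice structure, needed for summation via esum *)
HB.instance Definition _ (LV : countType) (LE : Type) (e0 : LE) :=
  gen_eqMixin (graph LV LE e0).
HB.instance Definition _ (LV : countType) (LE : Type) (e0 : LE) :=
  gen_choiceMixin (graph LV LE e0).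

Section Induced.
Variables (LV : countType) (LE : Type) (e0 : LE).

Definition incl_sub (A B : {fset LV}) (u : (A `&` B)%fset) : B :=
  [` fsubsetP (fsubsetIr A B) _ (fsvalP u)]%fset.

Definition induced_edges (G : graph LV LE e0) (W : {fset LV}) :
  {ffun (W `&` gV G)%fset * (W `&` gV G)%fset -> LE} :=
  [ffun p => gE G (incl_sub p.1, incl_sub p.2)].

Lemma induced_noloop (G : graph LV LE e0) (W : {fset LV}) v :
  induced_edges G W (v, v) = e0.
Proof. by rewrite ffunE; exact: gE_noloop. Qed.

(* G(W) : the subgraph of G ind_subgraph by W (W is intersected with V(G);
   we only use it with W `<=` V(G)). *)
Definition ind_subgraph (G : graph LV LE e0) (W : {fset LV}) : graph LV LE e0 :=
  Graph (W `&` gV G)%fset (induced_edges G W) (@induced_noloop G W).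

(* S_k(G), listed as the sequence of G(W) for W ⊆ V(G), |W| = k
   (W ↦ G(W) is injective since V(G(W)) = W). *)
Definition Sk (G : graph LV LE e0) (k : nat) : seq (graph LV LE e0) :=
  [seq ind_subgraph G W | W <- enum_fset (fpowerset (gV G)) & #|` W|%fset == k].

Definition projectable (GS : set (graph LV LE e0)) : Prop :=
  forall G, GS G -> forall W : {fset LV}, (W `<=` gV G)%fset -> GS (ind_subgraph G W).
End Induced.

From HB Require Import structures.
From mathcomp Require Import all_boot all_order all_algebra.
From mathcomp Require Import finmap.
From mathcomp Require Import all_classical all_reals all_analysis.
Import Order.TTheory GRing.Theory Num.Theory.
Local Open Scope ring_scope.
Set Implicit Arguments. Unset Strict Implicit.

(** Möbius inversion on the subset lattice of V(G): any [g] on graphs satisfies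
    [g G = \sum_(W ⊆ V(G)) mobius g (G(W))]. Take [g := ln P]; the term of the
    empty subgraph is the constant [psi0 = ln P(∅)], where [P(∅) > 0] because
    some graph has positive mass. If [P G > 0], the positivity condition gives
    [P (G(W)) > 0] for every [W], so the junk value [ln 0] never enters. Potentials of graphs
    with [P = 0] are set to [-oo]; such a [G] is its own subgraph of top order,
    so its Gibbs sum is [-oo] and [exp (-oo) = 0]. *)

Lemma sum_partition_by_size (V : nmodType) (T : eqType) (s : seq T)
    (w : T -> nat) (F : T -> V) (n : nat) :
  {in s, forall x, (w x <= n)%N} ->
  \sum_(1 <= k < n.+1) \sum_(x <- s | w x == k) F x = \sum_(x <- s | (0 < w x)%N) F x.
Proof.
move=> s_le; under eq_bigr do rewrite big_mkcond.
rewrite exchange_big [RHS]big_mkcond big_seq [RHS]big_seq; apply: eq_bigr => x xs /=.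
rewrite -big_mkcond; under eq_bigl do rewrite eq_sym.
by rewrite big_nat1_eq ltnS s_le // andbT.
Qed.

Lemma sume_eqNy (R : numDomainType) (T : eqType) (s : seq T) (F : T -> \bar R) x :
  x \in s -> F x = -oo%E -> (\sum_(y <- s) F y)%E = -oo%E.
Proof.
elim: s => // y s IHs; rewrite inE big_cons => /orP[/eqP<- ->|/IHs h /h ->].
  by rewrite addNye.
by rewrite addeNy.
Qed.

Lemma esum_neq0_gt0 (R : realType) (T : choiceType) (S : set T) (f : T -> R) :
  (forall x, S x -> 0 <= f x) -> (\esum_(x in S) (f x)%:E)%E != 0%E ->
  exists2 x, S x & 0 < f x.
Proof.
move=> f_ge0; apply: contra_neqP => no_pos; apply: esum1 => x Sx.
apply/eqP; rewrite eqe eq_le f_ge0 // andbT leNgt.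
by apply/negP => fx_gt0; apply: no_pos; exists x.
Qed.

Section InducedSubgraphs.
Variables (LV : countType) (LE : Type) (e0 : LE).
Local Notation graph := (graph LV LE e0).

Lemma graph_ext (G1 G2 : graph) :
  gV G1 = gV G2 ->
  (forall (x y : gV G1) (x' y' : gV G2), val x = val x' -> val y = val y' ->
     gE G1 (x, y) = gE G2 (x', y')) -> G1 = G2.
Proof.
case: G1 => V1 E1 h1; case: G2 => V2 E2 h2 /= eV; subst V2 => eE.
have E12 : E1 = E2 by apply/ffunP => -[x y]; exact: eE.
by subst E2; congr Graph; exact: Prop_irrelevance.
Qed.

Lemma ind_subgraph_full (G : graph) : ind_subgraph G (gV G) = G.
Proof.
apply: graph_ext => [|x y x' y' ex ey] /=; first exact: fsetIid.
by rewrite ffunE; congr (gE G (_, _)); exact: val_inj.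
Qed.

Lemma card_ind_subgraph (G : graph) (W : {fset LV}) :
  (W `<=` gV G)%fset -> #|` gV (ind_subgraph G W)| = #|` W|.
Proof. by move=> /fsetIidPl /= ->. Qed.

Definition empty_graph : graph :=
  Graph fset0 [ffun => e0] (fun v => ffunE _ (v, v)).

Lemma graph_eq0 (G : graph) : gV G = fset0 -> G = empty_graph.
Proof. by move=> GV0; apply: graph_ext => // -[x xG]; exfalso; move: xG; rewrite GV0. Qed.

Lemma ind_subgraph0 (G : graph) : ind_subgraph G fset0 = empty_graph.
Proof. exact/graph_eq0/fset0I. Qed.

Lemma card_proper_subset (G : graph) (W : {fset LV}) :
  W \in fpowerset (gV G) -> W != gV G -> (#|` W| < #|` gV G|)%N.
Proof.
by rewrite fpowersetE => sW WnV; apply: fproper_ltn_card; rewrite fproperEneq WnV.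
Qed.

Section Mobius.
Variables (V : zmodType) (g : graph -> V).

Fixpoint mobius_iter (n : nat) (H : graph) : V :=
  if n is n'.+1 then
    g H - \sum_(W <- fpowerset (gV H) | W != gV H) mobius_iter n' (ind_subgraph H W)
  else 0.

Definition mobius (H : graph) : V := mobius_iter (#|` gV H|).+1 H.

Lemma mobius_iter_fuel n m (H : graph) :
  (#|` gV H| < n)%N -> (#|` gV H| < m)%N -> mobius_iter n H = mobius_iter m H.
Proof.
elim: n m H => [|n IHn] [|m] H //= Hn Hm.
congr (g H - _); rewrite big_seq_cond [RHS]big_seq_cond; apply: eq_bigr => W /andP[WH WnV].
have ltW := card_proper_subset WH WnV.
have Hsub : (W `<=` gV H)%fset by rewrite -fpowersetE.
by apply: IHn; rewrite card_ind_subgraph // (leq_trans ltW).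
Qed.

Lemma mobiusE (H : graph) :
  mobius H = g H - \sum_(W <- fpowerset (gV H) | W != gV H) mobius (ind_subgraph H W).
Proof.
congr (g H - _); rewrite big_seq_cond [RHS]big_seq_cond; apply: eq_bigr => W /andP[WH WnV].
have Hsub : (W `<=` gV H)%fset by rewrite -fpowersetE.
by apply: mobius_iter_fuel; rewrite // card_ind_subgraph // card_proper_subset.
Qed.

Lemma mobius_empty (H : graph) : gV H = fset0 -> mobius H = g H.
Proof.
move=> VH0; rewrite mobiusE big_seq_cond big1 ?subr0 // => W /andP[WH].
by move/(card_proper_subset WH); rewrite VH0 cardfs0 ltn0.
Qed.

Lemma mobius_inversion (H : graph) :
  g H = \sum_(W <- fpowerset (gV H)) mobius (ind_subgraph H W).
Proof.
rewrite (bigD1_seq (gV H)) ?fset_uniq //=; last by rewrite fpowersetE.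
by rewrite ind_subgraph_full [mobius H]mobiusE subrK.
Qed.

Lemma mobius_inversion_nonempty (H : graph) :
  g H = g empty_graph +
        \sum_(W <- fpowerset (gV H) | W != fset0) mobius (ind_subgraph H W).
Proof.
rewrite mobius_inversion (bigD1_seq fset0) ?fset_uniq ?fpowersetE ?fsub0set //=.
by rewrite ind_subgraph0 mobius_empty.
Qed.

End Mobius.

Lemma Sk_full (G : graph) : G \in Sk G #|` gV G|.
Proof.
apply/mapP; exists (gV G); last by rewrite ind_subgraph_full.
by rewrite mem_filter eqxx fpowersetE fsubset_refl.
Qed.

End InducedSubgraphs.

Section GibbsSum.
Variables (R : realType) (LV : countType) (LE : Type) (e0 : LE).
Variable psi : nat -> graph LV LE e0 -> \bar R.

Lemma sum_Sk_mobius (g : graph LV LE e0 -> R) (G : graph LV LE e0) :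
  (forall k W, (W `<=` gV G)%fset -> psi k (ind_subgraph G W) = (mobius g (ind_subgraph G W))%:E) ->
  (\sum_(1 <= k < (#|` gV G|).+1) \sum_(G' <- Sk G k) psi k G')%E =
    (g G - g (empty_graph LV e0))%:E.
Proof.
move=> psiE.
have Sk_sum k : (\sum_(G' <- Sk G k) psi k G')%E =
    (\sum_(W <- fpowerset (gV G) | #|` W| == k) (mobius g (ind_subgraph G W))%:E)%E.
  rewrite /Sk big_map big_filter big_seq_cond [RHS]big_seq_cond.
  by apply: eq_bigr => W /andP[WG _]; apply: psiE; rewrite -fpowersetE.
under eq_bigr do rewrite Sk_sum.
rewrite sum_partition_by_size => [|W]; last by rewrite fpowersetE => /fsubset_leq_card.
rewrite sumEFin (mobius_inversion_nonempty g G) [g _ + _]addrC addrK.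
by under eq_bigl do rewrite cardfs_gt0.
Qed.

Lemma sum_Sk_eqNy (G : graph LV LE e0) :
  (0 < #|` gV G|)%N -> psi #|` gV G| G = -oo%E ->
  (\sum_(1 <= k < (#|` gV G|).+1) \sum_(G' <- Sk G k) psi k G')%E = -oo%E.
Proof.
move=> VG_gt0 psiG; apply: (sume_eqNy (x := #|` gV G|)).
  by rewrite mem_index_iota VG_gt0 ltnS leqnn.
exact: sume_eqNy (Sk_full G) psiG.
Qed.

End GibbsSum.

Theorem theorem2p1 (R : realType) (LV : countType) (LE : Type) (e0 : LE)
    (GS : set (graph LV LE e0)) (P : graph LV LE e0 -> R) :
  countable GS ->
  projectable GS ->
  (forall G, GS G -> (0 <= P G)%R) ->
  (\esum_(G in GS) ((P G)%:E))%E = 1%E ->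
  (forall G, GS G -> (0 < P G)%R ->
     forall W : {fset LV}, (W `<=` gV G)%fset -> (0 < P (ind_subgraph G W))%R) ->
  exists (psi0 : R) (psi : nat -> graph LV LE e0 -> \bar R),
    (forall k G, psi k G != +oo%E) /\
    forall G, GS G ->
      ((P G)%:E = expeR (psi0%:E +
         \sum_(1 <= k < (#|` gV G|%fset).+1) \sum_(G' <- Sk G k) psi k G'))%E.
Proof.
move=> _ _ P_ge0 P_sum1 P_hered.
have [G0 GS_G0 PG0_gt0] : exists2 G0, GS G0 & 0 < P G0.
  by apply: esum_neq0_gt0 => //; rewrite P_sum1 eqe oner_neq0.
have Pempty_gt0 : 0 < P (empty_graph LV e0).
  by rewrite -(ind_subgraph0 G0); apply: P_hered; rewrite ?fsub0set.
pose g H := ln (P H).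
exists (g (empty_graph LV e0)), (fun _ H => if 0 < P H then (mobius g H)%:E else -oo%E).
split=> [k H|G GS_G]; first by case: ifP.
have [PG_gt0|PG_le0] := ltP 0 (P G).
  rewrite (sum_Sk_mobius (g := g)) => [|k W WG]; last by rewrite P_hered.
  by rewrite -EFinD addrC subrK /expeR lnK.
have VG_gt0 : (0 < #|` gV G|)%N.
  by rewrite cardfs_gt0; apply: contraTneq PG_le0 => VG0; rewrite (graph_eq0 VG0) -ltNge.
rewrite sum_Sk_eqNy //=; last by rewrite ltNge PG_le0.
by apply/eqP; rewrite eqe eq_le PG_le0 P_ge0.
Qed.
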